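(* The group $\Gamma^{(2)} = \text{GU}_2(D)\cap U_2$ consists of the following set of matrices: \[\Gamma^{(2)} =\text{SU}_{2}(D)\cap g^{-1}\text{GL}_2(\mathcal{O})g.\]
   Context: $D$ is a definite quaternion algebra over $\mathbb{Q}$ ramified exactly at $\{p,\infty\}$ for a fixed prime $p$, with standard involution $x\mapsto\overline{x}$, and $\mathcal{O}$ is a fixed maximal order. $\text{GU}_2(D) = \{g\in M_2(D)\,|\,g\overline{g}^T = \mu(g)I,\ \mu(g)\in\mathbb{Q}^\times\}$ is the unitary similitude group, and $\text{SU}_2(D)$ denotes its elements with similitude $\mu=1$. Fix $g\in\text{GL}_2(D)$ such that the left $\mathcal{O}$-lattice $\mathcal{O}^2 g\subseteq D^2$ lies in the non-principal genus (i.e. its completion at $p$ is not locally equivalent to $\mathcal{O}_p^2$). Let $U_2 = \text{Stab}_{\text{GU}_2(D_{\mathbb{A}_f})}(\mathcal{O}^2 g)$ be the corresponding open compact subgroup of $\text{GU}_2(D_{\mathbb{A}_f})$, and $\Gamma^{(2)} = \text{GU}_2(D)\cap U_2$, i.e. $\Gamma^{(2)} = \text{Stab}_{\text{GU}_2(D)}(\mathcal{O}^2 g)$. *)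

From HB Require Import structures.
From mathcomp Require Import all_boot all_order all_algebra all_field.
Set Implicit Arguments. Unset Strict Implicit. Unset Printing Implicit Defensive.
Import Order.TTheory GRing.Theory Num.Theory.
Local Open Scope ring_scope.

Section Quaternion.
Variable D : falgType rat.

Definition quaternion_division_algebra : Prop :=
  [/\ \dim (fullv : {vspace D}) = 4%N,
      (forall x : D, (forall y : D, x * y = y * x) -> exists r : rat, x = r%:A) &
      (forall x : D, x != 0 -> x \is a GRing.unit)].

Definition standard_involution (conj : D -> D) : Prop :=
  [/\ (forall (r : rat) (x y : D), conj (r *: x + y) = r *: conj x + conj y),
      (forall x y : D, conj (x * y) = conj y * conj x),
      (forall x : D, conj (conj x) = x),
      conj 1 = 1 &
      (forall x : D, exists t n : rat, x + conj x = t%:A /\ x * conj x = n%:A)].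

Definition definite (conj : D -> D) : Prop :=
  forall x : D, x != 0 -> exists n : rat, 0 < n /\ x * conj x = n%:A.

Definition lattice_basis (O : D -> Prop) (e : 'I_4 -> D) : Prop :=
  (forall x : D, O x <-> exists c : 'I_4 -> int, x = \sum_i ((c i)%:~R : rat) *: e i) /\
  (forall x : D, exists r : 'I_4 -> rat, x = \sum_i r i *: e i).

Definition is_order (O : D -> Prop) : Prop :=
  [/\ exists e, lattice_basis O e, O 1 & (forall x y, O x -> O y -> O (x * y))].

Definition maximal_order (O : D -> Prop) : Prop :=
  is_order O /\
  forall O' : D -> Prop, is_order O' -> (forall x, O x -> O' x) -> forall x, O' x -> O x.

Definition reduced_disc (conj : D -> D) (O : D -> Prop) (d : nat) : Prop :=
  exists e, lattice_basis O e /\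
  exists T : 'M[rat]_4,
    (forall i j, (T i j)%:A = e i * e j + conj (e i * e j)) /\
    `|\det T| = (d ^ 2)%:R.

Definition ctr {m n} (conj : D -> D) (A : 'M[D]_(m, n)) : 'M[D]_(n, m) :=
  (map_mx conj A)^T.

Definition GU2 (conj : D -> D) (g : 'M[D]_2) : Prop :=
  exists mu : rat, mu != 0 /\ g *m ctr conj g = (mu%:A)%:M.

Definition SU2 (conj : D -> D) (g : 'M[D]_2) : Prop :=
  g *m ctr conj g = 1%:M.

Definition GL2O (O : D -> Prop) (u : 'M[D]_2) : Prop :=
  (forall i j, O (u i j)) /\
  exists ui : 'M[D]_2, (forall i j, O (ui i j)) /\ u *m ui = 1%:M /\ ui *m u = 1%:M.

Definition in_lattice (O : D -> Prop) (g : 'M[D]_2) (w : 'rV[D]_2) : Prop :=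
  exists v : 'rV[D]_2, (forall j, O (v 0 j)) /\ w = v *m g.

Definition stabilises (O : D -> Prop) (g gamma : 'M[D]_2) : Prop :=
  (forall w, in_lattice O g w -> in_lattice O g (w *m gamma)) /\
  (forall w, in_lattice O g w -> exists w', in_lattice O g w' /\ w' *m gamma = w).

(* D_p is the completion of D for the p-adic topology whose neighbourhoods of 0
   are the p^k O_(p), O_(p) = O localised at p.  Elements of M_{m,n}(D_p) are
   represented by (entrywise) Cauchy sequences of matrices over D. *)
Variables (conj : D -> D) (O : D -> Prop) (p : nat).

Definition Oloc (x : D) : Prop :=
  exists n : nat, coprime n p /\ O ((n%:R : rat) *: x).

Definition psmall (k : nat) (x : D) : Prop := Oloc (((p ^ k)%:R : rat)^-1 *: x).

Definition cauchyD (s : nat -> D) : Prop :=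
  forall k, exists N, forall a b, (N <= a)%N -> (N <= b)%N -> psmall k (s a - s b).

Definition nullD (s : nat -> D) : Prop :=
  forall k, exists N, forall a, (N <= a)%N -> psmall k (s a).

Definition cauchyM {m n} (s : nat -> 'M[D]_(m, n)) : Prop :=
  forall i j, cauchyD (fun a => s a i j).

Definition eqpM {m n} (s t : nat -> 'M[D]_(m, n)) : Prop :=
  forall i j, nullD (fun a => s a i j - t a i j).

(* entries in O_p = closure of O in D_p *)
Definition intpM {m n} (s : nat -> 'M[D]_(m, n)) : Prop :=
  forall i j, exists N, forall a, (N <= a)%N -> Oloc (s a i j).

Definition GU2p (h : nat -> 'M[D]_2) : Prop :=
  cauchyM h /\
  exists mu : nat -> rat,
    cauchyD (fun a => (mu a)%:A) /\ ~ nullD (fun a => (mu a)%:A) /\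
    eqpM (fun a => h a *m ctr conj (h a)) (fun a => ((mu a)%:A)%:M).

Definition lattice_p_eq (M : nat -> 'M[D]_2) : Prop :=
  (forall w : nat -> 'rV[D]_2, cauchyM w -> intpM w ->
      intpM (fun a => w a *m M a)) /\
  (forall w : nat -> 'rV[D]_2, cauchyM w -> intpM w ->
      exists v : nat -> 'rV[D]_2,
        [/\ cauchyM v, intpM v & eqpM (fun a => v a *m M a) w]).

Definition principal_genus_at_p (g : 'M[D]_2) : Prop :=
  exists h : nat -> 'M[D]_2, GU2p h /\ lattice_p_eq (fun a => g *m h a).

End Quaternion.

(* A similitude gamma with multiplier mu that stabilises the lattice L = O^2 g
   multiplies the set of hermitian norms x xbar^T of vectors of L by mu and by
   mu^-1.  The form is positive definite and its values on L have bounded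
   denominators, so the positive norms on L are bounded away from 0, which
   forces mu = 1.  For gamma in SU_2(D) stabilising L, u = g gamma g^-1 is
   integral, and so is its inverse g gammabar^T g^-1. *)

From HB Require Import structures.
From mathcomp Require Import all_boot all_order all_algebra all_field.
From mathcomp Require Import ring lra.
Set Implicit Arguments.
Unset Strict Implicit.
Unset Printing Implicit Defensive.

Import Order.TTheory GRing.Theory Num.Theory.
Local Open Scope ring_scope.

Section ArchimedeanPowers.
Variable R : archiRealFieldType.

Lemma bernoulli_ler (a : R) (n : nat) : 0 <= a -> 1 + n%:R * a <= (1 + a) ^+ n.
Proof.
move=> a_ge0; elim: n => [|n IHn]; first by rewrite mul0r addr0 expr0.
rewrite exprS -natr1; apply: le_trans (ler_wpM2l _ IHn); last lra.
have : 0 <= n%:R * (a * a) by rewrite mulr_ge0 ?mulr_ge0.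
nra.
Qed.

Lemma expr_unbounded (a c : R) : 1 < a -> exists n, c < a ^+ n.
Proof.
move=> a_gt1; have a1_gt0 : 0 < a - 1 by rewrite subr_gt0.
have [n lt_c_n] : exists n : nat, `|c| / (a - 1) < n%:R.
  exists (Num.Def.archi_bound (`|c| / (a - 1))).
  by apply: archi_boundP; rewrite divr_ge0 // ltW.
exists n; have := bernoulli_ler n (ltW a1_gt0).
rewrite (addrC 1 (a - 1)) subrK; apply: lt_le_trans.
rewrite (le_lt_trans (ler_norm c)) // ltr_wpDl // -ltr_pdivrMr //.
Qed.

Lemma mul_invariant_eq1 (P : R -> Prop) (K m mu : R) :
  (forall r, P r -> 0 <= r) -> (forall r, P r -> 0 < r -> 1 <= K * r) ->
  P m -> 0 < m -> mu != 0 ->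
  (forall r, P r -> P (mu * r)) -> (forall r, P r -> P (r / mu)) -> mu = 1.
Proof.
move=> P_ge0 P_discrete Pm m_gt0 mu_neq0 P_mul P_div.
have mu_gt0 : 0 < mu.
  by rewrite lt_def mu_neq0 -(pmulr_lge0 _ m_gt0); apply/P_ge0/P_mul.
have no_shrink a : 1 < a -> (forall r, P r -> P (r / a)) -> False.
  move=> a_gt1 P_diva.
  have [n lt_Km_an] := expr_unbounded (K * m) a_gt1.
  have an_gt0 : 0 < a ^+ n by rewrite exprn_gt0 // (lt_trans ltr01).
  have P_m_an : P (m / a ^+ n).
    elim: n {lt_Km_an an_gt0} => [|n IHn]; first by rewrite expr0 divr1.
    by rewrite exprSr invfM mulrA; apply: P_diva.
  have := P_discrete _ P_m_an (divr_gt0 m_gt0 an_gt0).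
  by rewrite mulrA ler_pdivlMr // mul1r leNgt lt_Km_an.
case: (ltgtP mu 1) => // [mu_lt1|mu_gt1]; last by case: (no_shrink _ mu_gt1 P_div).
case: (no_shrink mu^-1); first by rewrite invf_gt1.
by move=> r /P_mul; rewrite invrK mulrC.
Qed.

End ArchimedeanPowers.

Lemma exists_common_denom (I : finType) (f : I -> rat) :
  exists2 M : nat, (0 < M)%N & forall i, M%:R * f i \is a Num.int.
Proof.
exists (\prod_i `|denq (f i)|)%N.
  by rewrite prodn_gt0 // => i; rewrite absz_gt0 denq_neq0.
move=> i; rewrite (bigD1 i) //= natrM mulrAC rpredM ?natr_int //.
by rewrite natr_absz ger0_norm ?ltW ?denq_gt0 // mulrC -numqE intr_int.
Qed.

Section Scalars.
Variable D : falgType rat.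

Lemma in_alg_inj (r s : rat) : r%:A = s%:A :> D -> r = s.
Proof.
by move/eqP; rewrite -subr_eq0 -scalerBl scaler_eq0 oner_eq0 orbF subr_eq0 => /eqP.
Qed.

Lemma big_scalar (P : rat -> Prop) (I : Type) (s : seq I) (Q : pred I) (F : I -> D) :
  P 0 -> (forall a b, P a -> P b -> P (a + b)) ->
  (forall i, Q i -> exists2 a, F i = a%:A & P a) ->
  exists2 a, \sum_(i <- s | Q i) F i = a%:A & P a.
Proof.
move=> P0 PD PF; apply: (big_ind (fun t => exists2 a, t = a%:A & P a)).
- by exists 0; rewrite ?scale0r.
- by move=> _ _ [a -> Pa] [b -> Pb]; exists (a + b); [rewrite scalerDl | exact: PD].
- exact: PF.
Qed.

End Scalars.

Section StandardInvolution.
Variables (D : falgType rat) (conj : D -> D).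
Hypothesis conj_std : standard_involution conj.

Lemma conjD x y : conj (x + y) = conj x + conj y.
Proof. by case: conj_std => H _ _ _ _; have := H 1 x y; rewrite !scale1r. Qed.

Lemma conj0 : conj 0 = 0.
Proof. by apply: (@addrI _ (conj 0)); rewrite -conjD !addr0. Qed.

Lemma conjZ r x : conj (r *: x) = r *: conj x.
Proof.
by case: conj_std => H _ _ _ _; have := H r x 0; rewrite !addr0 conj0 addr0.
Qed.

Lemma conjM x y : conj (x * y) = conj y * conj x.
Proof. by case: conj_std. Qed.

Lemma conjK x : conj (conj x) = x.
Proof. by case: conj_std. Qed.

Lemma conj_sum (I : Type) (s : seq I) (P : pred I) (F : I -> D) :
  conj (\sum_(i <- s | P i) F i) = \sum_(i <- s | P i) conj (F i).
Proof. exact: (big_morph conj conjD conj0). Qed.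

Lemma ctr_mul m n k (A : 'M[D]_(m, n)) (B : 'M[D]_(n, k)) :
  ctr conj (A *m B) = ctr conj B *m ctr conj A.
Proof.
apply/matrixP => i j; rewrite !mxE conj_sum; apply: eq_bigr => l _.
by rewrite !mxE conjM.
Qed.

Lemma norm_scalar x : exists n : rat, x * conj x = n%:A.
Proof. by case: conj_std => _ _ _ _ /(_ x) [_ [n [_ ->]]]; exists n. Qed.

Definition hnorm (x : 'rV[D]_2) : D := (x *m ctr conj x) 0 0.

Lemma hnormE x : hnorm x = \sum_j x 0 j * conj (x 0 j).
Proof. by rewrite /hnorm !mxE; apply: eq_bigr => j _; rewrite !mxE. Qed.

Lemma hnorm_similitude (h : 'M[D]_2) (mu : rat) x :
  h *m ctr conj h = (mu%:A)%:M -> hnorm (x *m h) = mu *: hnorm x.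
Proof.
move=> h_sim; rewrite /hnorm ctr_mul mulmxA -(mulmxA x) h_sim !mxE scaler_sumr.
apply: eq_bigr => j _.
rewrite !mxE (bigD1 j) //= big1 ?addr0 => [|k /negbTE k_neq_j].
  by rewrite !mxE eqxx mulr1n -scalerAr mulr1 -scalerAl.
by rewrite !mxE k_neq_j mulr0n mulr0.
Qed.

Hypothesis conj_def : definite conj.

Lemma norm_ge0 x : exists2 n : rat, x * conj x = n%:A & 0 <= n.
Proof.
have [->|x_neq0] := eqVneq x 0; first by exists 0; rewrite ?conj0 ?mul0r ?scale0r.
by have [n [n_gt0 ->]] := conj_def x_neq0; exists n; rewrite ?ltW.
Qed.

Lemma hnorm_ge0 x : exists2 r : rat, hnorm x = r%:A & 0 <= r.
Proof.
rewrite hnormE; apply: big_scalar => // [a b|j _].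
  exact: addr_ge0.
exact: norm_ge0.
Qed.

Lemma hnorm_gt0 x : x != 0 -> exists2 r : rat, hnorm x = r%:A & 0 < r.
Proof.
move=> x_neq0; have [j xj_neq0] : exists j, x 0 j != 0.
  apply/existsP; apply: contraR x_neq0; rewrite negb_exists => /forallP x0.
  by apply/eqP/matrixP => i j; rewrite ord1 mxE; apply/eqP; rewrite -[_ == _]negbK x0.
have [a [a_gt0 ha]] := conj_def xj_neq0.
have [b hb b_ge0] : exists2 b : rat,
    \sum_(k | k != j) x 0 k * conj (x 0 k) = b%:A & 0 <= b.
  by apply: big_scalar => // [a' b'|k _]; [apply: addr_ge0|apply: norm_ge0].
exists (a + b); last by rewrite ltr_wpDr.
by rewrite hnormE (bigD1 j) //= ha hb scalerDl.
Qed.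

End StandardInvolution.

Section Lattice.
Variables (D : falgType rat) (O : D -> Prop) (e : 'I_4 -> D).
Hypothesis O_basis : lattice_basis O e.

Lemma lattice0 : O 0.
Proof.
by apply/O_basis.1; exists (fun=> 0); rewrite big1 // => i _; rewrite scale0r.
Qed.

Lemma latticeD x y : O x -> O y -> O (x + y).
Proof.
move=> /O_basis.1 [c ->] /O_basis.1 [d ->]; apply/O_basis.1.
exists (fun i => c i + d i); rewrite -big_split /=.
by apply: eq_bigr => i _; rewrite intrD scalerDl.
Qed.

Lemma lattice_sum (I : Type) (s : seq I) (P : pred I) (F : I -> D) :
  (forall i, P i -> O (F i)) -> O (\sum_(i <- s | P i) F i).
Proof. exact: (big_ind O lattice0 latticeD). Qed.

Lemma exists_common_lattice_denom (I : finType) (x : I -> D) :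
  exists2 N : nat, (0 < N)%N & forall i, O (N%:R *: x i).
Proof.
have /fin_all_exists [r x_r] : forall i, exists r : 'I_4 -> rat,
    x i = \sum_k r k *: e k by move=> i; apply: O_basis.2.
have [N N_gt0 Nr_int] :=
  exists_common_denom (fun ik : (I * 'I_4)%type => r ik.1 ik.2).
exists N => // i; rewrite x_r scaler_sumr; apply: lattice_sum => k _.
have /intrP [z Nr_z] := Nr_int (i, k).
rewrite scalerA Nr_z; apply/O_basis.1; exists (fun l => z *+ (l == k)).
rewrite (bigD1 k) //= eqxx mulr1n big1 ?addr0 // => l /negbTE ->.
by rewrite mulr0n scale0r.
Qed.

Variable conj : D -> D.
Hypothesis conj_std : standard_involution conj.

(* 2 nrd(y) is the quadratic form sum_ij c_i c_j trd(e_i ebar_j) in the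
   coordinates c of y, whose coefficients are rational. *)
Lemma lattice_norm_denom : exists2 K : nat, (0 < K)%N &
  forall y n, O y -> y * conj y = n%:A -> K%:R * n \is a Num.int.
Proof.
have /fin_all_exists [t t_trd] : forall ij : ('I_4 * 'I_4)%type, exists t : rat,
    e ij.1 * conj (e ij.2) + e ij.2 * conj (e ij.1) = t%:A.
  move=> [i j]; case: conj_std => _ _ _ _ /(_ (e i * conj (e j))) [t [_ [t_def _]]].
  by exists t; rewrite -t_def (conjM conj_std) (conjK conj_std).
have [M M_gt0 Mt_int] := exists_common_denom t.
exists (M * 2)%N => [|y n /O_basis.1 [c ->] norm_y]; first by rewrite muln_gt0 M_gt0.
pose T i j := ((c i)%:~R * (c j)%:~R) *: (e i * conj (e j)).
have norm_T : n%:A = \sum_i \sum_j T i j.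
  rewrite -norm_y (conj_sum conj_std) mulr_suml; apply: eq_bigr => i _.
  rewrite mulr_sumr; apply: eq_bigr => j _.
  by rewrite (conjZ conj_std) -scalerAl -scalerAr scalerA.
have twice_norm :
    (n + n)%:A = (\sum_i \sum_j (c i)%:~R * (c j)%:~R * t (i, j))%:A :> D.
  rewrite scalerDl {1}norm_T exchange_big /= norm_T -big_split /= scaler_suml.
  apply: eq_bigr => i _; rewrite -big_split /= scaler_suml; apply: eq_bigr => j _.
  by rewrite /T [(c j)%:~R * _]mulrC -scalerDr addrC (t_trd (i, j)) scalerA.
have -> : (M * 2)%N%:R * n = M%:R * (n + n) by rewrite natrM; ring.
rewrite (in_alg_inj twice_norm) mulr_sumr.
apply: rpred_sum => i _; rewrite mulr_sumr; apply: rpred_sum => j _.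
by rewrite mulrCA; apply: rpredM (Mt_int (i, j)); apply: rpredM; apply: intr_int.
Qed.

Hypothesis O_mul : forall x y, O x -> O y -> O (x * y).

Lemma integral_row_mulmx m n (v : 'rV[D]_m) (A : 'M[D]_(m, n)) :
  (forall j, O (v 0 j)) -> (forall i j, O (A i j)) -> forall j, O ((v *m A) 0 j).
Proof. by move=> Ov OA j; rewrite mxE; apply: lattice_sum => k _; apply: O_mul. Qed.

Lemma hnorm_lattice_denom (g : 'M[D]_2) : exists2 K : nat, (0 < K)%N &
  forall (v : 'rV[D]_2) r, (forall j, O (v 0 j)) -> hnorm conj (v *m g) = r%:A ->
    K%:R * r \is a Num.int.
Proof.
have [N N_gt0 ONg] :=
  exists_common_lattice_denom (fun ij : ('I_2 * 'I_2)%type => g ij.1 ij.2).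
have [K0 K0_gt0 K0_int] := lattice_norm_denom.
exists (K0 * (N * N))%N => [|v r Ov]; first by rewrite !muln_gt0 K0_gt0 N_gt0.
rewrite hnormE => hnorm_r.
have [s sum_s Ks_int] : exists2 s : rat,
    \sum_j (v *m g) 0 j * conj ((v *m g) 0 j) = s%:A &
    (K0 * (N * N))%N%:R * s \is a Num.int.
  apply: big_scalar => [|a b Ka Kb|j _]; first by rewrite mulr0 rpred0.
    by rewrite mulrDr rpredD.
  set a := (v *m g) 0 j; have [n norm_a] := norm_scalar conj_std a.
  have ONa : O (N%:R *: a).
    rewrite /a mxE scaler_sumr; apply: lattice_sum => k _.
    by rewrite scalerAr; apply: O_mul => //; apply: ONg (k, j).
  have : (N%:R *: a) * conj (N%:R *: a) = (N%:R * N%:R * n)%:A.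
    by rewrite (conjZ conj_std) -scalerAl -scalerAr norm_a !scalerA.
  by move=> /(K0_int _ _ ONa) Kn_int; exists n; rewrite // !natrM -mulrA.
by move: sum_s; rewrite hnorm_r => /in_alg_inj ->.
Qed.

End Lattice.

Definition lattice_hnorm (D : falgType rat) (conj : D -> D) (O : D -> Prop)
    (g : 'M[D]_2) (r : rat) : Prop :=
  exists2 w, in_lattice O g w & hnorm conj w = r%:A.

Section Stabiliser.
Variables (D : falgType rat) (conj : D -> D) (O : D -> Prop) (e : 'I_4 -> D).
Hypotheses (conj_std : standard_involution conj) (conj_def : definite conj).
Hypotheses (O_basis : lattice_basis O e) (O1 : O 1).
Hypothesis O_mul : forall x y, O x -> O y -> O (x * y).
Variables (g ginv gamma : 'M[D]_2).
Hypotheses (g_ginv : g *m ginv = 1%:M) (ginv_g : ginv *m g = 1%:M).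
Hypothesis gamma_stab : stabilises O g gamma.

Local Notation lattice_hnorm := (lattice_hnorm conj O g).

Lemma integral_delta_mx m n i0 j0 i j : O ((delta_mx i0 j0 : 'M[D]_(m, n)) i j).
Proof.
by rewrite mxE; case: (_ && _) => /=; [apply: O1 | apply: lattice0 O_basis].
Qed.

Lemma lattice_hnorm_ge0 r : lattice_hnorm r -> 0 <= r.
Proof.
move=> [w _ w_r]; have [s] := hnorm_ge0 conj_std conj_def w.
by rewrite w_r => /in_alg_inj ->.
Qed.

Lemma lattice_hnorm_pos : exists2 m, 0 < m & lattice_hnorm m.
Proof.
pose v := delta_mx 0 0 : 'rV[D]_2.
have vg_neq0 : v *m g != 0.
  apply/eqP => vg0; have : v = 0 by rewrite -[v]mulmx1 -g_ginv mulmxA vg0 mul0mx.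
  by move/matrixP/(_ 0 0)/eqP; rewrite !mxE eqxx oner_eq0.
have [m vg_m m_gt0] := hnorm_gt0 conj_std conj_def vg_neq0.
exists m => //; exists (v *m g) => //.
by exists v; split=> // j; apply: integral_delta_mx.
Qed.

Lemma lattice_hnorm_discrete : exists K : rat, forall r,
  lattice_hnorm r -> 0 < r -> 1 <= K * r.
Proof.
have [K K_gt0 K_int] := hnorm_lattice_denom O_basis conj_std O_mul g.
exists K%:R => r [_ [v [Ov ->]] v_r] r_gt0.
have Kr_gt0 : 0 < K%:R * r by rewrite mulr_gt0 ?ltr0n.
by rewrite -(gtr0_norm Kr_gt0) norm_intr_ge1 ?(K_int _ _ Ov v_r) ?gt_eqF.
Qed.

Lemma lattice_hnorm_similitude_mul mu r : gamma *m ctr conj gamma = (mu%:A)%:M ->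
  lattice_hnorm r -> lattice_hnorm (mu * r).
Proof.
move=> gamma_sim [w w_in w_r]; exists (w *m gamma); first exact: gamma_stab.1.
by rewrite (hnorm_similitude conj_std _ gamma_sim) w_r scalerA.
Qed.

Lemma lattice_hnorm_similitude_div mu r : mu != 0 ->
  gamma *m ctr conj gamma = (mu%:A)%:M -> lattice_hnorm r -> lattice_hnorm (r / mu).
Proof.
move=> mu_neq0 gamma_sim [w w_in w_r].
have [w' [w'_in w'_gamma]] := gamma_stab.2 w w_in.
have [s w'_s _] := hnorm_ge0 conj_std conj_def w'.
exists w' => //; rewrite w'_s; congr (_%:A).
move: (hnorm_similitude conj_std w' gamma_sim).
by rewrite w'_gamma w_r w'_s scalerA => /in_alg_inj ->; rewrite mulrC mulKf.
Qed.

Lemma stabiliser_unitary : GU2 conj gamma -> SU2 conj gamma.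
Proof.
move=> [mu [mu_neq0 gamma_sim]].
have [K K_discrete] := lattice_hnorm_discrete.
have [m m_gt0 Pm] := lattice_hnorm_pos.
have mu1 : mu = 1.
  apply: (mul_invariant_eq1 lattice_hnorm_ge0 K_discrete Pm m_gt0 mu_neq0) => r.
    exact: lattice_hnorm_similitude_mul.
  exact: lattice_hnorm_similitude_div.
by rewrite /SU2 gamma_sim mu1 scale1r.
Qed.

Lemma unitary_stabiliser_GL2O : SU2 conj gamma -> GL2O O (g *m gamma *m ginv).
Proof.
move=> gamma_unitary; set u := g *m gamma *m ginv.
have row_in_lattice i : in_lattice O g (delta_mx 0 i *m g).
  by exists (delta_mx 0 i); split=> // j; apply: integral_delta_mx.
have u_int i j : O (u i j).
  have [v [Ov v_g]] := gamma_stab.1 _ (row_in_lattice i).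
  have -> : u i j = ((delta_mx 0 i : 'rV[D]_2) *m u) 0 j by rewrite -rowE /row mxE.
  by rewrite /u !mulmxA v_g -mulmxA g_ginv mulmx1; apply: Ov.
have /fin_all_exists2 [f f_int f_u] : forall i, exists2 v : 'rV[D]_2,
    (forall j, O (v 0 j)) & v *m u = delta_mx 0 i.
  move=> i; have [_ [[v [Ov ->]] vg_gamma]] := gamma_stab.2 _ (row_in_lattice i).
  by exists v => //; rewrite /u !mulmxA vg_gamma -mulmxA g_ginv mulmx1.
pose ui := \matrix_i f i.
have ui_u : ui *m u = 1%:M.
  by apply/row_matrixP => i; rewrite row_mul rowK f_u rowE mulmx1.
have u_ctr : u *m (g *m ctr conj gamma *m ginv) = 1%:M.
  rewrite /u !mulmxA -(mulmxA _ ginv g) ginv_g mulmx1.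
  by rewrite -(mulmxA g gamma) gamma_unitary mulmx1 g_ginv.
have ui_ctr : ui = g *m ctr conj gamma *m ginv.
  by rewrite -[ui]mulmx1 -u_ctr mulmxA ui_u mul1mx.
split=> //; exists ui; split; first by move=> i j; rewrite mxE; apply: f_int.
by split; [rewrite ui_ctr | exact: ui_u].
Qed.

End Stabiliser.

Lemma GL2O_conj_stabilises (D : falgType rat) (O : D -> Prop) (e : 'I_4 -> D)
    (g ginv u : 'M[D]_2) :
  lattice_basis O e -> (forall x y, O x -> O y -> O (x * y)) ->
  g *m ginv = 1%:M -> GL2O O u -> stabilises O g (ginv *m u *m g).
Proof.
move=> O_basis O_mul g_ginv [u_int [ui [ui_int [u_ui ui_u]]]].
have integral_mulmx := integral_row_mulmx O_basis O_mul.
split=> _ [v [Ov ->]].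
  exists (v *m u); split; first exact: integral_mulmx.
  by rewrite !mulmxA -(mulmxA v g ginv) g_ginv mulmx1.
exists (v *m ui *m g); split.
  by exists (v *m ui); split=> //; apply: integral_mulmx.
rewrite !mulmxA -(mulmxA (v *m ui) g ginv) g_ginv mulmx1.
by rewrite -(mulmxA v ui u) ui_u mulmx1.
Qed.

Theorem theorem5p1 (p : nat) (D : falgType rat) (conj : D -> D) (O : D -> Prop)
    (g ginv : 'M[D]_2) :
  prime p ->
  quaternion_division_algebra D ->
  standard_involution conj ->
  definite conj ->
  maximal_order O ->
  reduced_disc conj O p ->
  g *m ginv = 1%:M -> ginv *m g = 1%:M ->
  ~ principal_genus_at_p conj O p g ->
  forall gamma : 'M[D]_2,
    (GU2 conj gamma /\ stabilises O g gamma) <->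
    (SU2 conj gamma /\ exists u : 'M[D]_2, GL2O O u /\ gamma = ginv *m u *m g).
Proof.
move=> _ _ conj_std conj_def [[[e O_basis] O1 O_mul] _] _ g_ginv ginv_g _ gamma.
split=> [[gamma_GU gamma_stab] | [gamma_unitary [u [u_GL2O gamma_def]]]].
  have gamma_unitary : SU2 conj gamma :=
    stabiliser_unitary conj_std conj_def O_basis O1 O_mul g_ginv gamma_stab gamma_GU.
  split=> //; exists (g *m gamma *m ginv); split.
    exact (unitary_stabiliser_GL2O O_basis O1 g_ginv ginv_g gamma_stab gamma_unitary).
  by rewrite !mulmxA ginv_g mul1mx -mulmxA ginv_g mulmx1.
split; first by exists 1; split; [exact: oner_neq0 | rewrite scale1r].
rewrite gamma_def; exact (GL2O_conj_stabilises O_basis O_mul g_ginv u_GL2O).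
Qed.
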